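(* Let $h\ge 0$ be an integer and let $G$ be an $h$-almost-bipartite graph on $n$ vertices. Then $G$ contains at most $2^h n^2+2$ cliques.
   Context: Graphs are simple, finite and undirected. A clique is a set of pairwise adjacent vertices (the empty set and single vertices count). A graph $G$ is $h$-almost bipartite if $G-A$ is bipartite for some set $A\subseteq V(G)$ with $|A|\le h$. *)

From mathcomp Require Import all_boot.
Set Implicit Arguments. Unset Strict Implicit. Unset Printing Implicit Defensive.

Definition simple_graph (T : finType) (e : rel T) : Prop :=
  symmetric e /\ irreflexive e.

Definition is_clique (T : finType) (e : rel T) (S : {set T}) : bool :=
  [forall x in S, forall y in S, (x != y) ==> e x y].

Definition bipartite_minus (T : finType) (e : rel T) (A : {set T}) : Prop :=
  exists c : T -> bool,
    forall x y, x \notin A -> y \notin A -> e x y -> c x != c y.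

Definition almost_bipartite (T : finType) (e : rel T) (h : nat) : Prop :=
  exists A : {set T}, #|A| <= h /\ bipartite_minus e A.

(* Number of cliques (including the empty set and singletons). *)
Definition num_cliques (T : finType) (e : rel T) : nat :=
  #|[set S : {set T} | is_clique e S]|.

From mathcomp Require Import all_boot.
From mathcomp Require Import zify.
Set Implicit Arguments. Unset Strict Implicit. Unset Printing Implicit Defensive.

(* A clique meets each colour class of G - A in at most one vertex, so it has
   at most two vertices outside A.  Hence S |-> (S :&: A, S :\: A) injects the
   cliques into (subsets of A) x (sets of at most two vertices), a set of size
   at most 2^h (1 + n + C(n, 2)), which is at most 2^h n^2 once n >= 2; the
   extra 2 covers n <= 1. *)

Lemma card_sets_atmost (T : finType) (k : nat) :
  #|[set B : {set T} | #|B| <= k]| = \sum_(i < k.+1) 'C(#|T|, i).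
Proof.
elim: k => [|k IHk].
  by rewrite big_ord1 -card_draws; apply: eq_card => B; rewrite !inE leqn0.
have -> : [set B : {set T} | #|B| <= k.+1]
          = [set B : {set T} | #|B| <= k] :|: [set B : {set T} | #|B| == k.+1].
  by apply/setP => B; rewrite !inE leq_eqVlt ltnS orbC.
rewrite cardsU.
have -> : [set B : {set T} | #|B| <= k] :&: [set B : {set T} | #|B| == k.+1] = set0.
  by apply/setP => B; rewrite !inE; case: eqP => [->|_]; rewrite ?ltnn ?andbF.
by rewrite cards0 subn0 IHk card_draws [RHS]big_ord_recr.
Qed.

Lemma card_split_outside (T : finType) (X : {set {set T}}) (A : {set T}) k :
  {in X, forall S, #|S :\: A| <= k} ->
  #|X| <= 2 ^ #|A| * #|[set B : {set T} | #|B| <= k]|.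
Proof.
move=> small.
pose split_at (S : {set T}) := (S :&: A, S :\: A).
have split_inj : injective split_at.
  by move=> S1 S2 [eqI eqD]; rewrite -(setID S1 A) eqI eqD setID.
rewrite -card_powerset -cardsX -(card_imset _ split_inj).
apply/subset_leq_card/subsetP => _ /imsetP[S SX ->]; rewrite /split_at.
by rewrite !inE /= subsetIr small.
Qed.

Lemma is_cliqueS (T : finType) (e : rel T) (S S' : {set T}) :
  S \subset S' -> is_clique e S' -> is_clique e S.
Proof.
move=> /subsetP sub_SS' /forall_inP cliqueS'.
apply/forall_inP => x xS; apply/forall_inP => y yS.
exact: (forall_inP (cliqueS' x (sub_SS' x xS)) y (sub_SS' y yS)).
Qed.

Lemma clique_card_le2 (T : finType) (e : rel T) (c : T -> bool) (S : {set T}) :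
  is_clique e S -> {in S &, forall x y, e x y -> c x != c y} -> #|S| <= 2.
Proof.
move=> /forall_inP cliqueS proper.
have c_inj : {in S &, injective c}.
  move=> x y xS yS cxy; apply/eqP; apply: contraT => neq_xy.
  have exy : e x y by rewrite (implyP (forall_inP (cliqueS x xS) y yS)).
  by move: (proper x y xS yS exy); rewrite cxy eqxx.
by rewrite -(card_in_imset c_inj) -(card_bool) max_card.
Qed.

Lemma expn2_mul_small_sets_le (a h n : nat) : a <= h -> a <= n ->
  2 ^ a * (1 + n + 'C(n, 2)) <= 2 ^ h * n ^ 2 + 2.
Proof.
move=> le_ah le_an.
have le_2a_2h : 2 ^ a <= 2 ^ h by rewrite leq_exp2l.
case: (leqP 2 n) => [le_2n | lt_n2].
  have le_sq : 1 + n + 'C(n, 2) <= n ^ 2 by rewrite bin2 -divn2; nia.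
  exact: leq_trans (leq_mul le_2a_2h le_sq) (leq_addr _ _).
case: n le_an lt_n2 => [|[|//]] le_an _.
  by move: le_an; rewrite leqn0 => /eqP ->; rewrite muln0.
have le_2a_2 : 2 ^ a <= 2 ^ 1 by rewrite leq_exp2l.
by rewrite exp1n muln1 bin_small // addn0 mulnC mul2n -addnn leq_add.
Qed.

Theorem lemma8 (T : finType) (e : rel T) (h : nat) :
  simple_graph e -> almost_bipartite e h ->
  num_cliques e <= 2 ^ h * #|T| ^ 2 + 2.
Proof.
move=> _ [A [le_Ah [c proper_c]]].
have outside_le2 S : S \in [set S | is_clique e S] -> #|S :\: A| <= 2.
  rewrite inE => cliqueS; apply: (clique_card_le2 (c := c)).
    exact: is_cliqueS (subsetDl S A) cliqueS.
  by move=> x y /setDP[_ xA] /setDP[_ yA]; apply: proper_c.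
apply: leq_trans (card_split_outside outside_le2) _.
rewrite card_sets_atmost !big_ord_recr big_ord0 bin0 bin1 /=.
by apply: expn2_mul_small_sets_le => //; apply: max_card.
Qed.
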